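(* Let $\mathcal{S}=(U,\mathcal{P})$ be a relational schema with finite domain $U$, let $D=D^n\cup D^x$ be a database instance, let $\mathcal{Q}$ be a Boolean first-order query, and let $\tau$ be an endogenous tuple. (a) If $X_\tau$ occurs positively in $\Phi_{\mathcal{Q}}(D)$, then $\mathcal{E}^D_{\tau,\mathcal{Q}}=r_{\mathcal{Q},X_\tau}\cdot\frac{\sigma_{\mathcal{Q}}}{\sigma_{X_\tau}}$. (b) If $X_\tau$ occurs negatively in $\Phi_{\mathcal{Q}}(D)$, then $\mathcal{E}^D_{\tau,\mathcal{Q}}=-\,r_{\mathcal{Q},X_\tau}\cdot\frac{\sigma_{\mathcal{Q}}}{\sigma_{X_\tau}}$. Here $\mathcal{Q}$ and $X_\tau$ are regarded as Bernoulli random variables on the space $\Omega$ of truth assignments to $\mathit{Var}(\Phi_{\mathcal{Q}}(D))$ with the uniform distribution conditioned on the exogenous variables taking their fixed values (positive exogenous variables equal to $1$, negative ones equal to $0$), $\sigma_{\mathcal{Q}},\sigma_{X_\tau}$ are their standard deviations, and $r_{\mathcal{Q},X_\tau}$ is their Pearson correlation coefficient.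
   Context: A database instance is a finite set of ground atoms (tuples) partitioned as $D=D^n\cup D^x$ into endogenous and exogenous tuples. Lineage: for every potential tuple $\tau$ introduce a propositional variable $X_\tau$; $\Phi_{\mathcal{Q}}$ is defined inductively by $\Phi_\tau:=X_\tau$, $\Phi_{a=a}:=\mathit{true}$, $\Phi_{a=b}:=\mathit{false}$ for distinct constants, $\Phi_{\mathcal{Q}_1\wedge\mathcal{Q}_2}:=\Phi_{\mathcal{Q}_1}\wedge\Phi_{\mathcal{Q}_2}$, $\Phi_{\mathcal{Q}_1\vee\mathcal{Q}_2}:=\Phi_{\mathcal{Q}_1}\vee\Phi_{\mathcal{Q}_2}$, $\Phi_{\exists x\,\mathcal{Q}}:=\bigvee_{c\in U}\Phi_{\mathcal{Q}[c/x]}$, $\Phi_{\neg\mathcal{Q}}:=\neg\Phi_{\mathcal{Q}}$. With negation only in front of variables, the $D$-lineage $\Phi_{\mathcal{Q}}(D)$ is obtained by replacing each positive occurrence of $X_\tau$ with $\tau\notin D$ by $\mathit{false}$ and each literal $\neg X_\tau$ with $\tau\in D$ by $\mathit{false}$. Standing assumptions: no variable occurs both positively and negatively in $\Phi_{\mathcal{Q}}(D)$, and every $\tau\notin D$ occurring negatively is regarded as endogenous. Exogenous variables (of tuples in $D^x$) split into positive ones $\mathit{Var}^{x,+}$ and negative ones $\mathit{Var}^{x,-}$. $\Omega$ is the set of all assignments $\sigma:\mathit{Var}(\Phi_{\mathcal{Q}}(D))\to\{0,1\}$ with uniform distribution; $\mathcal{Q}(\sigma)=1$ iff $\sigma\models\Phi_{\mathcal{Q}}(D)$,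 and $X_\tau(\sigma)=\sigma(X_\tau)$; $\mathit{do}(X=x):=\{\sigma:\sigma(X)=x\}$. For endogenous $\tau$, $E(\mathcal{Q}\mid\mathit{do}(X_\tau=v))$ is the conditional expectation of $\mathcal{Q}$ given $\mathit{do}(X_\tau=v)$ intersected with $\mathit{do}(X_{\tau'}=1)$ for all $X_{\tau'}\in\mathit{Var}^{x,+}$ and $\mathit{do}(X_{\tau'}=0)$ for all $X_{\tau'}\in\mathit{Var}^{x,-}$. The causal effect is $\mathcal{E}^D_{\tau,\mathcal{Q}}:=E(\mathcal{Q}\mid\mathit{do}(X_\tau=v))-E(\mathcal{Q}\mid\mathit{do}(X_\tau=1-v))$ with $v=1$ if $\tau\in D$ and $v=0$ otherwise. The Pearson correlation coefficient is $r_{X,Y}=\mathrm{Cov}(X,Y)/(\sigma_X\sigma_Y)$. *)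

From HB Require Import structures.
From mathcomp Require Import all_boot all_order all_algebra.
Set Implicit Arguments. Unset Strict Implicit. Unset Printing Implicit Defensive.
Import Order.TTheory GRing.Theory Num.Theory.

Section Lineage.
Variables (U : finType) (P : finType) (ar : P -> nat).

Definition gtuple := {p : P & {ffun 'I_(ar p) -> U}}.

Inductive term := TVar of nat | TCst of U.

Inductive fo :=
| FAtom (p : P) of ('I_(ar p) -> term)
| FEq of term & term
| FAnd of fo & fo
| FOr of fo & fo
| FNot of fo
| FEx of nat & fo.

Definition bound_in (bnd : seq nat) (t : term) : bool :=
  if t is TVar x then x \in bnd else true.

Fixpoint closed_in (bnd : seq nat) (q : fo) : bool :=
  match q with
  | FAtom p f => [forall i, bound_in bnd (f i)]
  | FEq a b => bound_in bnd a && bound_in bnd b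
  | FAnd a b | FOr a b => closed_in bnd a && closed_in bnd b
  | FNot a => closed_in bnd a
  | FEx x a => closed_in (x :: bnd) a
  end.

Definition closed_fo (q : fo) : bool := closed_in [::] q.

Inductive pform :=
| PVar of gtuple | PTrue | PFalse
| PAnd of pform & pform | POr of pform & pform | PNot of pform.

Definition tval (s : nat -> option U) (t : term) : option U :=
  match t with TVar x => s x | TCst c => Some c end.

Definition upd (s : nat -> option U) (x : nat) (c : U) : nat -> option U :=
  fun y => if y == x then Some c else s y.

(* Lineage Phi_Q; the substitution Q[c/x] is carried by s. *)
Fixpoint lin (s : nat -> option U) (q : fo) : pform :=
  match q with
  | FAtom p f =>
      match [pick g : {ffun 'I_(ar p) -> U} | [forall i, tval s (f i) == Some (g i)]] with
      | Some g => PVar (Tagged (fun p => {ffun 'I_(ar p) -> U}) g)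
      | None => PFalse
      end
  | FEq a b =>
      match tval s a, tval s b with
      | Some c, Some d => if c == d then PTrue else PFalse
      | _, _ => PFalse
      end
  | FAnd a b => PAnd (lin s a) (lin s b)
  | FOr a b => POr (lin s a) (lin s b)
  | FNot a => PNot (lin s a)
  | FEx x a => foldr (fun c acc => POr (lin (upd s x c) a) acc) PFalse (enum U)
  end.

Definition lineage (q : fo) : pform := lin (fun _ => None) q.

Inductive nform :=
| NLit of bool & gtuple   (* NLit true t = X_t, NLit false t = ~ X_t *)
| NTrue | NFalse
| NAnd of nform & nform | NOr of nform & nform.

(* Pushing negations inward (b = false means "negated"). *)
Fixpoint to_nnf (b : bool) (f : pform) : nform :=
  match f with
  | PVar t => NLit b t
  | PTrue => if b then NTrue else NFalse
  | PFalse => if b then NFalse else NTrue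
  | PAnd f1 f2 => if b then NAnd (to_nnf b f1) (to_nnf b f2)
                  else NOr (to_nnf b f1) (to_nnf b f2)
  | POr f1 f2 => if b then NOr (to_nnf b f1) (to_nnf b f2)
                 else NAnd (to_nnf b f1) (to_nnf b f2)
  | PNot f1 => to_nnf (~~ b) f1
  end.

Fixpoint dlin (D : {set gtuple}) (f : nform) : nform :=
  match f with
  | NLit true t => if t \in D then NLit true t else NFalse
  | NLit false t => if t \in D then NFalse else NLit false t
  | NTrue => NTrue
  | NFalse => NFalse
  | NAnd f1 f2 => NAnd (dlin D f1) (dlin D f2)
  | NOr f1 f2 => NOr (dlin D f1) (dlin D f2)
  end.

Definition DLineage (D : {set gtuple}) (q : fo) : nform := dlin D (to_nnf true (lineage q)).

(* occ true t f : X_t occurs positively; occ false t f : X_t occurs negatively. *)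
Fixpoint occ (b : bool) (t : gtuple) (f : nform) : bool :=
  match f with
  | NLit b' t' => (b' == b) && (t' == t)
  | NTrue | NFalse => false
  | NAnd f1 f2 | NOr f1 f2 => occ b t f1 || occ b t f2
  end.

Definition fvars (f : nform) : {set gtuple} :=
  [set t | occ true t f || occ false t f].

Fixpoint feval (sg : gtuple -> bool) (f : nform) : bool :=
  match f with
  | NLit b t => if b then sg t else ~~ sg t
  | NTrue => true
  | NFalse => false
  | NAnd f1 f2 => feval sg f1 && feval sg f2
  | NOr f1 f2 => feval sg f1 || feval sg f2
  end.

Variable R : rcfType.
Local Open Scope ring_scope.

Definition assignment := {ffun gtuple -> bool}.

(* Omega: all assignments Var(f) -> {0,1}, represented as total assignments
   that are 0 outside Var(f) (a bijective encoding). *)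
Definition Omega (f : nform) : {set assignment} :=
  [set sg : assignment | [forall t, (t \notin fvars f) ==> ~~ sg t]].

(* Conditioning on the exogenous variables taking their fixed values:
   Var^{x,+} (exogenous, occurring positively) set to 1,
   Var^{x,-} (exogenous, occurring negatively) set to 0. *)
Definition exo_ok (Dx : {set gtuple}) (f : nform) (sg : assignment) : bool :=
  [forall t, ((t \in Dx) && occ true t f) ==> sg t] &&
  [forall t, ((t \in Dx) && occ false t f) ==> ~~ sg t].

Definition Omega_x (Dx : {set gtuple}) (f : nform) : {set assignment} :=
  [set sg in Omega f | exo_ok Dx f sg].

Definition cexp (A : {set assignment}) (rv : assignment -> R) : R :=
  (\sum_(sg in A) rv sg) / #|A|%:R.

Definition variance (A : {set assignment}) (rv : assignment -> R) : R :=
  cexp A (fun sg => (rv sg - cexp A rv) ^+ 2).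

Definition covariance (A : {set assignment}) (r1 r2 : assignment -> R) : R :=
  cexp A (fun sg => (r1 sg - cexp A r1) * (r2 sg - cexp A r2)).

Definition stddev (A : {set assignment}) (rv : assignment -> R) : R :=
  Num.sqrt (variance A rv).

Definition pearson (A : {set assignment}) (r1 r2 : assignment -> R) : R :=
  covariance A r1 r2 / (stddev A r1 * stddev A r2).

Definition Qrv (f : nform) (sg : assignment) : R := (feval sg f)%:R.
Definition Xrv (t : gtuple) (sg : assignment) : R := (sg t)%:R.

(* E(Q | do(X_t = v)) : conditioned on do(X_t = v) and the exogenous values. *)
Definition do_exp (Dx : {set gtuple}) (f : nform) (t : gtuple) (v : bool) : R :=
  cexp [set sg in Omega_x Dx f | sg t == v] (Qrv f).

Definition causal_effect (Dn Dx : {set gtuple}) (q : fo) (t : gtuple) : R :=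
  let D := Dn :|: Dx in
  let f := DLineage D q in
  let v := t \in D in
  do_exp Dx f t v - do_exp Dx f t (~~ v).

End Lineage.

From HB Require Import structures.
From mathcomp Require Import all_boot all_order all_algebra.
From mathcomp Require Import ring.
Set Implicit Arguments. Unset Strict Implicit. Unset Printing Implicit Defensive.
Import Order.TTheory GRing.Theory Num.Theory.
Local Open Scope ring_scope.

(* Let A be the conditioned sample space and A_b its part where X_tau = b.  For an
   indicator X with P(X = 1) = p one has Var X = p (1 - p) and
   Cov(Q, X) = p (1 - p) (E[Q | A_1] - E[Q | A_0]), so r sigma_Q / sigma_X =
   Cov(Q, X) / Var X is the difference of the two interventional expectations; when
   sigma_Q = 0, Q is constant on A and both sides vanish.  Since tau is endogenous,
   toggling X_tau maps A to itself, so both halves A_0 and A_1 are nonempty.  The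
   sign is that of v in do(X_tau = v): v = 1 for a positive occurrence (tau in D) and
   v = 0 for a negative one. *)

Section BernoulliRegression.
Variables (R : rcfType) (U P : finType) (ar : P -> nat).
Variables (A : {set assignment U ar}) (tau : gtuple U ar).

Let A_ (b : bool) := [set sg in A | sg tau == b].
Let n_ (b : bool) : R := #|A_ b|%:R.

Lemma sum_split_tau (g : assignment U ar -> R) :
  \sum_(sg in A) g sg = \sum_(sg in A_ true) g sg + \sum_(sg in A_ false) g sg.
Proof.
rewrite (bigID (fun sg : assignment U ar => sg tau)) /=; congr (_ + _); apply: eq_bigl => sg;
  by rewrite !inE; case: (sg tau); rewrite ?andbT ?andbF.
Qed.

Lemma sum_const_on (B : {set assignment U ar}) (g : assignment U ar -> R) c :
  {in B, forall sg, g sg = c} -> \sum_(sg in B) g sg = c * #|B|%:R.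
Proof. by move=> gc; rewrite (eq_bigr (fun _ => c)) // sumr_const mulr_natr. Qed.

Lemma Xrv_cond b : {in A_ b, forall sg, Xrv R tau sg = b%:R}.
Proof. by move=> sg; rewrite inE /Xrv => /andP[_ /eqP ->]. Qed.

Lemma card_split : #|A|%:R = n_ true + n_ false.
Proof.
have sum1 (B : {set assignment U ar}) : \sum_(sg in B) 1 = #|B|%:R :> R.
  by rewrite sumr_const.
by rewrite /n_ -!sum1 sum_split_tau.
Qed.

Lemma cexp_const_on (B : {set assignment U ar}) (g : assignment U ar -> R) c :
  (0 < #|B|)%N -> {in B, forall sg, g sg = c} -> cexp B g = c.
Proof.
move=> B_gt0 gc; rewrite /cexp (sum_const_on gc) mulfK //.
by rewrite pnatr_eq0 -lt0n.
Qed.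

Lemma variance_ge0 (g : assignment U ar -> R) : 0 <= variance A g.
Proof. by rewrite /variance /cexp divr_ge0 ?sumr_ge0 // => sg _; apply: sqr_ge0. Qed.

Lemma stddev_eq0_const (g : assignment U ar -> R) :
  stddev A g = 0 -> {in A, forall sg, g sg = cexp A g}.
Proof.
move=> /eqP; rewrite sqrtr_eq0 => var_le0 sg sgA.
have var0 : variance A g = 0 by apply/eqP; rewrite eq_le var_le0 variance_ge0.
have cardA : #|A|%:R != 0 :> R by rewrite pnatr_eq0 -lt0n; apply/card_gt0P; exists sg.
move: var0; rewrite /variance /cexp => /(canRL (divfK cardA)); rewrite mul0r.
move=> /psumr_eq0P sq0; apply/eqP; rewrite -subr_eq0 -sqrf_eq0; apply/eqP.
by apply: sq0 => // ? _; apply: sqr_ge0.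
Qed.

Hypotheses (A1_gt0 : (0 < #|A_ true|)%N) (A0_gt0 : (0 < #|A_ false|)%N).

Let n1_neq0 : n_ true != 0. Proof. by rewrite pnatr_eq0 -lt0n. Qed.
Let n0_neq0 : n_ false != 0. Proof. by rewrite pnatr_eq0 -lt0n. Qed.
Let n_neq0 : n_ true + n_ false != 0.
Proof. by rewrite lt0r_neq0 // addr_gt0 // ltr0n. Qed.

Lemma cexp_Xrv : cexp A (Xrv R tau) = n_ true / (n_ true + n_ false).
Proof.
rewrite /cexp card_split sum_split_tau.
by rewrite (sum_const_on (@Xrv_cond true)) (sum_const_on (@Xrv_cond false)) mul0r addr0 mul1r.
Qed.

Lemma variance_Xrv :
  variance A (Xrv R tau) = n_ true * n_ false / (n_ true + n_ false) ^+ 2.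
Proof.
rewrite /variance cexp_Xrv {1}/cexp card_split sum_split_tau.
set p := n_ true / _.
rewrite (@sum_const_on _ _ ((1 - p) ^+ 2)); last by move=> sg /Xrv_cond ->.
rewrite (@sum_const_on _ _ ((0 - p) ^+ 2)); last by move=> sg /Xrv_cond ->.
by rewrite /p; field.
Qed.

Lemma covariance_Xrv (g : assignment U ar -> R) :
  covariance A g (Xrv R tau) =
  n_ true * n_ false / (n_ true + n_ false) ^+ 2 * (cexp (A_ true) g - cexp (A_ false) g).
Proof.
rewrite /covariance cexp_Xrv {1}/cexp card_split sum_split_tau.
set e := cexp A g; set p := n_ true / _.
rewrite (eq_bigr (fun sg => (g sg - e) * (1 - p))); last by move=> sg /Xrv_cond ->.
rewrite [X in _ + X](eq_bigr (fun sg => (g sg - e) * (0 - p))); last by move=> sg /Xrv_cond ->.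
rewrite -!mulr_suml !sumrB !(@sum_const_on _ (fun=> e) e) //.
rewrite /e /p /cexp card_split sum_split_tau -/(n_ true) -/(n_ false).
by field; apply/and3P.
Qed.

Lemma regression_Xrv (g : assignment U ar -> R) :
  pearson A g (Xrv R tau) * (stddev A g / stddev A (Xrv R tau)) =
  cexp (A_ true) g - cexp (A_ false) g.
Proof.
have [sg0 | sg_neq0] := eqVneq (stddev A g) 0.
  (* the Pearson coefficient is 0 / 0 here, which evaluates to 0 *)
  have g_const b : {in A_ b, forall sg, g sg = cexp A g}.
    by move=> sg; rewrite inE => /andP[/(stddev_eq0_const sg0)].
  by rewrite sg0 mul0r mulr0 !(cexp_const_on _ (g_const _)) ?subrr.
have vX_neq0 : variance A (Xrv R tau) != 0.
  by rewrite variance_Xrv !mulf_neq0 ?invr_eq0 ?expf_neq0.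
have sX2 : stddev A (Xrv R tau) ^+ 2 = variance A (Xrv R tau).
  by rewrite sqr_sqrtr // variance_ge0.
have sX_neq0 : stddev A (Xrv R tau) != 0.
  by apply: contraNneq vX_neq0 => sX0; rewrite -sX2 sX0 expr0n.
rewrite /pearson covariance_Xrv -variance_Xrv -sX2.
by field; apply/andP.
Qed.
End BernoulliRegression.

Lemma occ_dlin (U P : finType) (ar : P -> nat) (D : {set gtuple U ar}) g b t :
  occ b t (dlin D g) -> (t \in D) = b.
Proof.
elim: g => [b' t'| | |g1 IH1 g2 IH2|g1 IH1 g2 IH2] //=; last 2 first.
- by case/orP=> [/IH1|/IH2].
- by case/orP=> [/IH1|/IH2].
by case: b'; case: ifP => t'D //= /andP[/eqP <- /eqP <-].
Qed.

Section ToggleEndogenous.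
Variables (U P : finType) (ar : P -> nat).
Variables (Dx : {set gtuple U ar}) (f : nform U ar) (tau : gtuple U ar).
Hypotheses (tau_var : tau \in fvars f) (tau_endo : tau \notin Dx).
Hypothesis no_mixed : forall t, ~~ (occ true t f && occ false t f).

Definition toggle (sg : assignment U ar) : assignment U ar :=
  [ffun t => if t == tau then ~~ sg t else sg t].

Lemma toggle_Omega_x sg : (toggle sg \in Omega_x Dx f) = (sg \in Omega_x Dx f).
Proof.
rewrite !inE; congr (_ && (_ && _)); apply: eq_forallb => t;
  rewrite ffunE; case: eqP => // ->.
- by rewrite tau_var.
- by rewrite (negbTE tau_endo).
- by rewrite (negbTE tau_endo).
Qed.

Definition exo_assignment : assignment U ar := [ffun t => (t \in Dx) && occ true t f].

Lemma exo_assignment_Omega_x : exo_assignment \in Omega_x Dx f.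
Proof.
rewrite !inE; apply/and3P; split; apply/forallP => t; rewrite ffunE.
- by apply/implyP; apply: contra => /andP[_ occ_t]; rewrite inE occ_t.
- by apply/implyP.
- apply/implyP => /andP[_ occ_f]; apply/negP => /andP[_ occ_t].
  by move: (no_mixed t); rewrite occ_t occ_f.
Qed.

Lemma card_Omega_x_tau_gt0 b : (0 < #|[set sg in Omega_x Dx f | sg tau == b]|)%N.
Proof.
have w_tau : exo_assignment tau = false by rewrite ffunE (negbTE tau_endo).
apply/card_gt0P; case: b.
- exists (toggle exo_assignment).
  by rewrite inE toggle_Omega_x exo_assignment_Omega_x ffunE eqxx w_tau.
- by exists exo_assignment; rewrite inE exo_assignment_Omega_x w_tau.
Qed.
End ToggleEndogenous.

Theorem proposition3 (R : rcfType) (U P : finType) (ar : P -> nat)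
    (Dn Dx : {set gtuple U ar}) (q : fo U ar) (tau : gtuple U ar) :
  [disjoint Dn & Dx] ->
  closed_fo q ->
  (* standing assumption: no variable occurs both positively and negatively *)
  (forall t, ~~ (occ true t (DLineage (Dn :|: Dx) q) &&
                 occ false t (DLineage (Dn :|: Dx) q))) ->
  (* tau is endogenous: in D^n, or not in D (then regarded as endogenous) *)
  (tau \in Dn) || (tau \notin Dn :|: Dx) ->
  let f := DLineage (Dn :|: Dx) q in
  let A := Omega_x Dx f in
  let r := pearson A (Qrv R f) (Xrv R tau) in
  let sQ := stddev A (Qrv R f) in
  let sX := stddev A (Xrv R tau) in
  (occ true tau f -> causal_effect R Dn Dx q tau = r * (sQ / sX)) /\
  (occ false tau f -> causal_effect R Dn Dx q tau = - (r * (sQ / sX))).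
Proof.
move=> Dn_Dx _ no_mixed tau_endo f A r sQ sX.
have regression : tau \in fvars f -> tau \notin Dx ->
    r * (sQ / sX) = do_exp R Dx f tau true - do_exp R Dx f tau false.
  by move=> tau_var tau_Dx; rewrite regression_Xrv ?card_Omega_x_tau_gt0.
have tau_var b : occ b tau f -> tau \in fvars f.
  by case: b => occ_b; rewrite inE occ_b ?orbT.
split=> occ_tau; have tau_D := occ_dlin occ_tau; rewrite /causal_effect /= tau_D.
- have tau_Dn : tau \in Dn by move: tau_endo; rewrite tau_D orbF.
  have tau_Dx : tau \notin Dx by rewrite (disjointFr Dn_Dx tau_Dn).
  by rewrite regression ?(tau_var true).
- have tau_Dx : tau \notin Dx by apply: contraFN tau_D; rewrite inE orbC => ->.
  by rewrite regression ?(tau_var false) // opprB.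
Qed.
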